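(* Let $\chi$ be a kernel as described in the context with $m_1(\chi,u)=0$ for all $u\in\mathbb{R}^+$. Let $f\in C^{(2)}(\mathbb{R}^+)$ and suppose $$\|I_w^{\chi}f-f\|_\infty=o(w^{-1})\quad\text{as } w\to+\infty.$$ Then $f$ is constant on $\mathbb{R}^+$.
   Context: A kernel is a continuous function $\chi:\mathbb{R}^+\to\mathbb{R}$ satisfying: (i) $\sum_{k=-\infty}^{+\infty}\chi(e^{-k}u)=1$ for every $u\in\mathbb{R}^+$; (ii) $M_2(\chi)<+\infty$ and $\lim_{\gamma\to+\infty}\sum_{|k-\log u|>\gamma}|\chi(e^{-k}u)|\,|k-\log u|^2=0$ uniformly with respect to $u\in\mathbb{R}^+$. Algebraic moments: $m_\nu(\chi,u)=\sum_{k\in\mathbb{Z}}\chi(e^{-k}u)(k-\log u)^\nu$; absolute moments: $M_\nu(\chi,u)=\sum_{k\in\mathbb{Z}}|\chi(e^{-k}u)|\,|k-\log u|^\nu$, $M_\nu(\chi)=\sup_{u>0}M_\nu(\chi,u)$. For $w>0$, $x\in\mathbb{R}^+$: $(I_w^{\chi}f)(x)=\sum_{k\in\mathbb{Z}}\chi(e^{-k}x^w)\,w\int_{k/w}^{(k+1)/w}f(e^u)\,du$; $\|\cdot\|_\infty$ is the sup norm on $\mathbb{R}^+$. Mellin differential operator: $(\theta f)(x)=xf'(x)$, $\theta^r=\theta(\theta^{r-1})$. $C(\mathbb{R}^+)$ denotes the bounded continuous functions on $\mathbb{R}^+$, and $C^{(2)}(\mathbb{R}^+)$ the $f\in C(\mathbb{R}^+)$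 such that $\theta f$ and $\theta^2 f$ exist and belong to $C(\mathbb{R}^+)$. *)

From Stdlib Require Import Reals Lra Lia ZArith Classical ClassicalEpsilon.
Open Scope R_scope.

Definition zsum (a : Z -> R) (l : R) : Prop :=
  exists l1 l2,
    infinite_sum (fun n : nat => a (Z.of_nat n)) l1 /\
    infinite_sum (fun n : nat => a (- Z.of_nat (S n))%Z) l2 /\
    l = l1 + l2.

(* Total value of a bilateral series (0 if it diverges; only used where it converges). *)
Definition zseries (a : Z -> R) : R :=
  match excluded_middle_informative (exists l, zsum a l) with
  | left H => proj1_sig (constructive_indefinite_description _ H)
  | right _ => 0
  end.

(* Total Riemann integral (0 if not Riemann integrable; the value of
   RiemannInt does not depend on the integrability proof). *)
Definition RInt (g : R -> R) (a b : R) : R :=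
  match excluded_middle_informative (inhabited (Riemann_integrable g a b)) with
  | left H => RiemannInt (epsilon H (fun _ => True))
  | right _ => 0
  end.

Definition abs_moment_term (chi : R -> R) (nu : nat) (u : R) (k : Z) : R :=
  Rabs (chi (exp (- IZR k) * u)) * (Rabs (IZR k - ln u)) ^ nu.

Definition alg_moment_term (chi : R -> R) (nu : nat) (u : R) (k : Z) : R :=
  chi (exp (- IZR k) * u) * (IZR k - ln u) ^ nu.

Definition M2_finite (chi : R -> R) : Prop :=
  exists B, forall u, 0 < u ->
    exists s, zsum (abs_moment_term chi 2 u) s /\ s <= B.

Definition tail_condition (chi : R -> R) : Prop :=
  forall eps, 0 < eps -> exists G, forall gamma, G <= gamma -> forall u, 0 < u ->
    forall s,
      zsum (fun k => if Rlt_dec gamma (Rabs (IZR k - ln u))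
                     then abs_moment_term chi 2 u k else 0) s ->
      Rabs s < eps.

(* A kernel in the sense of the paper (chi : R^+ -> R, values off R^+ irrelevant). *)
Definition kernel (chi : R -> R) : Prop :=
  (forall u, 0 < u -> continuity_pt chi u) /\
  (forall u, 0 < u -> zsum (fun k => chi (exp (- IZR k) * u)) 1) /\
  M2_finite chi /\
  tail_condition chi.

Definition I_op (chi : R -> R) (w : R) (f : R -> R) (x : R) : R :=
  zseries (fun k => chi (exp (- IZR k) * Rpower x w) *
                    (w * RInt (fun u => f (exp u)) (IZR k / w) ((IZR k + 1) / w))).

Definition bc_pos (g : R -> R) : Prop :=
  (forall x, 0 < x -> continuity_pt g x) /\
  (exists B, forall x, 0 < x -> Rabs (g x) <= B).

(* f in C^(2)(R^+): f, theta f = x f'(x), theta^2 f = x (theta f)'(x)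
   exist (on R^+) and are bounded continuous on R^+. *)
Definition C2_mellin (f : R -> R) : Prop :=
  exists df ddf : R -> R,
    (forall x, 0 < x -> derivable_pt_lim f x (df x)) /\
    (forall x, 0 < x -> derivable_pt_lim (fun y => y * df y) x (ddf x)) /\
    bc_pos f /\
    bc_pos (fun x => x * df x) /\
    bc_pos (fun x => x * ddf x).

(* Substitute u = log x and g = f o exp, so that g' = theta f o exp and
   g'' = theta^2 f o exp.  A first-order Taylor expansion of g inside each cell
   [k/w, (k+1)/w], combined with the partition of unity and m_1(chi) = 0, gives
   (I_w f)(x) - f(x) = (theta f)(x) / (2w) + R_w(x), with |R_w(x)| controlled by
   (1 + (k - w log x)^2) / w^2 summed against |chi|.  Choosing w so that
   w log x lies halfway between two integers makes |k - w log x| >= 1/2 for every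
   k, so that this is at most a constant times the second absolute moment over
   w^2.  Such w exist arbitrarily large when x <> 1, hence the hypothesis
   o(1/w) forces (theta f)(x) = 0 for x <> 1, and f is constant.  This avoids
   the usual Voronovskaja limit. *)

From Coquelicot Require Import Coquelicot.
From Pilot Require Import Defs.
From Stdlib Require Import Reals ZArith Lra Lia FunctionalExtensionality Classical ClassicalEpsilon.
Open Scope R_scope.

Lemma zsum_unique a l m : zsum a l -> zsum a m -> l = m.
Proof.
  intros (l1 & l2 & H1 & H2 & ->) (m1 & m2 & G1 & G2 & ->).
  rewrite (uniqueness_sum _ _ _ H1 G1), (uniqueness_sum _ _ _ H2 G2); reflexivity.
Qed.

Lemma zseries_eq a l : zsum a l -> zseries a = l.
Proof.
  intros H. unfold zseries.
  destruct (excluded_middle_informative _) as [e|n].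
  - destruct (constructive_indefinite_description _ e) as [m Hm]; simpl.
    exact (zsum_unique _ _ _ Hm H).
  - exfalso; apply n; eauto.
Qed.

Lemma zsum_plus a b l m : zsum a l -> zsum b m -> zsum (fun k => a k + b k) (l + m).
Proof.
  intros (l1 & l2 & H1 & H2 & ->) (m1 & m2 & G1 & G2 & ->).
  exists (l1 + m1), (l2 + m2). repeat split.
  - apply is_series_Reals. apply is_series_Reals in H1, G1. exact (is_series_plus _ _ _ _ H1 G1).
  - apply is_series_Reals. apply is_series_Reals in H2, G2. exact (is_series_plus _ _ _ _ H2 G2).
  - ring.
Qed.

Lemma zsum_scal c a l : zsum a l -> zsum (fun k => c * a k) (c * l).
Proof.
  intros (l1 & l2 & H1 & H2 & ->).
  exists (c * l1), (c * l2). repeat split.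
  - apply is_series_Reals. apply is_series_Reals in H1. exact (is_series_scal c _ _ H1).
  - apply is_series_Reals. apply is_series_Reals in H2. exact (is_series_scal c _ _ H2).
  - ring.
Qed.

Lemma zsum_ext a b l : (forall k, a k = b k) -> zsum a l -> zsum b l.
Proof.
  intros H. replace b with a; auto. apply functional_extensionality; auto.
Qed.

Lemma infinite_sum_dominated (d c : nat -> R) S : (forall n, Rabs (d n) <= c n) ->
  infinite_sum c S -> exists S', infinite_sum d S' /\ Rabs S' <= S.
Proof.
  intros Hb Hc. apply is_series_Reals in Hc.
  assert (Ec : ex_series c) by (exists S; auto).
  assert (Ed : ex_series d) by (apply (@ex_series_le R_AbsRing R_CompleteNormedModule d c); auto).
  assert (Ea : ex_series (fun n => Rabs (d n))).
  { apply (@ex_series_le R_AbsRing R_CompleteNormedModule _ c); auto.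
    intro n. unfold norm; simpl. unfold abs; simpl. rewrite Rabs_Rabsolu; auto. }
  exists (Series d). split.
  - apply is_series_Reals, Series_correct; auto.
  - eapply Rle_trans; [apply Series_Rabs; auto|].
    rewrite <- (is_series_unique _ _ Hc). apply Series_le; auto.
    intro n; split; [apply Rabs_pos|auto].
Qed.

Lemma zsum_dominated (d c : Z -> R) S : (forall k, Rabs (d k) <= c k) ->
  zsum c S -> exists S', zsum d S' /\ Rabs S' <= S.
Proof.
  intros Hb (l1 & l2 & H1 & H2 & ->).
  destruct (infinite_sum_dominated (fun n => d (Z.of_nat n)) _ _ (fun n => Hb _) H1)
    as (s1 & A1 & B1).
  destruct (infinite_sum_dominated (fun n => d (- Z.of_nat (S n))%Z) _ _ (fun n => Hb _) H2)
    as (s2 & A2 & B2).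
  exists (s1 + s2). split.
  - exists s1, s2; auto.
  - eapply Rle_trans; [apply Rabs_triang|lra].
Qed.

Lemma derivable_pt_lim_comp_exp (h dh : R -> R) :
  (forall y, 0 < y -> derivable_pt_lim h y (dh y)) ->
  forall u, derivable_pt_lim (fun u => h (exp u)) u (exp u * dh (exp u)).
Proof.
  intros H u. rewrite Rmult_comm.
  apply (derivable_pt_lim_comp exp h); [apply derivable_pt_lim_exp|apply H, exp_pos].
Qed.

Lemma MVT_between (g g1 : R -> R) a b :
  (forall u, derivable_pt_lim g u (g1 u)) ->
  exists c, Rabs (c - a) <= Rabs (b - a) /\ g b - g a = g1 c * (b - a).
Proof.
  intros D. destruct (Rtotal_order a b) as [Hlt|[<-|Hgt]].
  - destruct (MVT_cor2 g g1 a b Hlt (fun c _ => D c)) as (c & Ec & Hc).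
    exists c. split; [rewrite !Rabs_right by lra; lra|exact Ec].
  - exists a. split; [right; reflexivity|ring].
  - destruct (MVT_cor2 g g1 b a Hgt (fun c _ => D c)) as (c & Ec & Hc).
    exists c. split; [rewrite !Rabs_left by lra; lra|lra].
Qed.

Lemma taylor_first_order_error (g g1 g2 : R -> R) B2 t u :
  (forall u, derivable_pt_lim g u (g1 u)) ->
  (forall u, derivable_pt_lim g1 u (g2 u)) ->
  (forall u, Rabs (g2 u) <= B2) ->
  Rabs (g u - g t - g1 t * (u - t)) <= B2 * (u - t)^2.
Proof.
  intros D1 D2 Bd.
  destruct (MVT_between g g1 t u D1) as (c & Hc & Ec).
  destruct (MVT_between g1 g2 t c D2) as (d & _ & Ed).
  replace (g u - g t - g1 t * (u - t)) with (g2 d * (c - t) * (u - t)) by (rewrite <- Ed; lra).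
  rewrite !Rabs_mult, <- pow2_abs.
  specialize (Bd d). pose proof (Rabs_pos (g2 d)). pose proof (Rabs_pos (c - t)).
  pose proof (Rabs_pos (u - t)).
  apply Rle_trans with (B2 * Rabs (c - t) * Rabs (u - t)).
  - apply Rmult_le_compat_r; [|apply Rmult_le_compat_r]; assumption.
  - rewrite Rmult_assoc. apply Rmult_le_compat_l; [lra|nra].
Qed.

Lemma RInt_continuous_eq (g : R -> R) a b : a <= b -> (forall u, continuity_pt g u) ->
  Defs.RInt g a b = Coquelicot.RInt.RInt g a b.
Proof.
  intros Hab Hc. unfold Defs.RInt.
  destruct (excluded_middle_informative _) as [H|H].
  - symmetry; apply RInt_Reals.
  - exfalso. apply H. constructor. apply continuity_implies_RiemannInt; auto.
Qed.

Lemma RInt_first_order_error (g g1 g2 : R -> R) B2 t a b :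
  (forall u, derivable_pt_lim g u (g1 u)) ->
  (forall u, derivable_pt_lim g1 u (g2 u)) ->
  (forall u, Rabs (g2 u) <= B2) -> a <= b ->
  Rabs (Defs.RInt g a b - (g t * (b - a) + g1 t * ((b - t)^2 - (a - t)^2) / 2))
   <= (b - a) * (B2 * (2 * (a - t)^2 + 2 * (b - a)^2)).
Proof.
  intros D1 D2 Bd Hab.
  assert (Cg : forall u, continuity_pt g u).
  { intro u. apply derivable_continuous_pt. exists (g1 u). apply D1. }
  rewrite RInt_continuous_eq by assumption.
  set (p := fun u => g t + g1 t * (u - t)).
  assert (Ip : is_RInt p a b (g t * (b - a) + g1 t * ((b - t)^2 - (a - t)^2) / 2)).
  { set (P := fun u => g t * u + g1 t * ((u - t)^2) / 2).
    replace (g t * (b - a) + g1 t * ((b - t)^2 - (a - t)^2) / 2) with (P b - P a)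
      by (unfold P; field).
    apply (is_RInt_derive (V:=R_CompleteNormedModule)).
    - intros x _. unfold P, p. auto_derive; auto. field.
    - intros x _. apply (@ex_derive_continuous R_AbsRing R_NormedModule p).
      unfold p. auto_derive; auto. }
  assert (Ig : is_RInt g a b (Coquelicot.RInt.RInt g a b)).
  { apply (@RInt_correct R_CompleteNormedModule), (@ex_RInt_continuous R_CompleteNormedModule).
    intros z _. apply continuity_pt_filterlim, Cg. }
  refine (@norm_RInt_le_const R_NormedModule (fun y => minus (g y) (p y)) a b _ _ Hab _
            (is_RInt_minus _ _ _ _ _ _ Ig Ip)).
  intros x Hx. unfold norm, minus, plus, opp, p; simpl. unfold abs; simpl.
  replace (g x + - (g t + g1 t * (x - t))) with (g x - g t - g1 t * (x - t)) by ring.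
  eapply Rle_trans; [apply (taylor_first_order_error g g1 g2 B2 t x D1 D2 Bd)|].
  assert (B2p : 0 <= B2) by (eapply Rle_trans; [apply Rabs_pos|apply (Bd 0)]).
  apply Rmult_le_compat_l; auto.
  assert (0 <= ((a - t) - (x - a))^2) by apply pow2_ge_0.
  assert ((x - a)^2 <= (b - a)^2) by (destruct Hx; apply pow_incr; lra).
  nra.
Qed.

Lemma cell_average_expansion (g g1 g2 : R -> R) B2 t w a :
  (forall u, derivable_pt_lim g u (g1 u)) ->
  (forall u, derivable_pt_lim g1 u (g2 u)) ->
  (forall u, Rabs (g2 u) <= B2) -> 0 < w ->
  Rabs (w * Defs.RInt g (a / w) ((a + 1) / w) - g t - g1 t * (a - w * t + 1/2) / w)
    <= B2 * (2 * (a - w * t)^2 + 2) / w^2.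
Proof.
  intros D1 D2 Bd wp.
  assert (le : a / w <= (a + 1) / w).
  { unfold Rdiv; apply Rmult_le_compat_r; [left; apply Rinv_0_lt_compat; auto|lra]. }
  pose proof (RInt_first_order_error g g1 g2 B2 t _ _ D1 D2 Bd le) as I.
  replace (w * Defs.RInt g (a / w) ((a + 1) / w) - g t - g1 t * (a - w * t + 1/2) / w)
    with (w * (Defs.RInt g (a / w) ((a + 1) / w) -
          (g t * ((a + 1) / w - a / w) + g1 t * (((a + 1) / w - t)^2 - (a / w - t)^2) / 2)))
    by (field; lra).
  replace (B2 * (2 * (a - w * t)^2 + 2) / w^2) with
    (w * (((a + 1) / w - a / w) * (B2 * (2 * (a / w - t)^2 + 2 * ((a + 1) / w - a / w)^2))))
    by (field; lra).
  rewrite Rabs_mult, (Rabs_right w) by lra.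
  apply Rmult_le_compat_l; lra.
Qed.

Lemma half_integer_distance (k z : Z) : 1/2 <= Rabs (IZR k - (IZR z + 1/2)).
Proof.
  destruct (Z.le_gt_cases k z) as [H|H].
  - apply IZR_le in H. rewrite Rabs_left by lra. lra.
  - assert (H' : (z + 1 <= k)%Z) by lia. apply IZR_le in H'. rewrite plus_IZR in H'.
    rewrite Rabs_right by lra. lra.
Qed.

(* Since |d| >= 1/2, the constant term 2 is at most 8 d^2. *)
Lemma remainder_moment_bound c r d B2 w : 0 < w -> 0 <= B2 -> 1/2 <= Rabs d ->
  Rabs r <= B2 * (2 * d^2 + 2) / w^2 ->
  Rabs (c * r) <= 10 * B2 / w^2 * (Rabs c * Rabs d ^ 2).
Proof.
  intros wp B2p Hd Hr.
  rewrite Rabs_mult, pow2_abs.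
  assert (1 <= 4 * d^2).
  { rewrite <- pow2_abs. pose proof (Rmult_le_compat (1/2) _ (1/2) _ ltac:(lra) ltac:(lra) Hd Hd).
    simpl. lra. }
  assert (0 <= Rabs c) by apply Rabs_pos.
  assert (0 < w^2) by (apply pow_lt; auto).
  apply Rle_trans with (Rabs c * (B2 * (2 * d^2 + 2) / w^2)); [apply Rmult_le_compat_l; auto|].
  replace (Rabs c * (B2 * (2 * d^2 + 2) / w^2)) with (Rabs c * B2 / w^2 * (2 * d^2 + 2))
    by (field; lra).
  replace (10 * B2 / w^2 * (Rabs c * d^2)) with (Rabs c * B2 / w^2 * (10 * d^2)) by (field; lra).
  apply Rmult_le_compat_l; [|lra].
  apply Rmult_le_pos; [nra|left; apply Rinv_0_lt_compat; lra].
Qed.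

Lemma exists_half_integer_scale t M : t <> 0 ->
  exists w, M < w /\ forall k : Z, 1/2 <= Rabs (IZR k - w * t).
Proof.
  intros tn.
  assert (tp : 0 < Rabs t) by (apply Rabs_pos_lt; auto).
  destruct (archimed (M * Rabs t)) as [Hz _].
  set (z := up (M * Rabs t)) in *.
  exists ((IZR z + 1/2) / Rabs t). split.
  - apply Rmult_lt_reg_r with (Rabs t); auto. field_simplify; lra.
  - intro k. destruct (Rcase_abs t) as [tl|tg].
    + rewrite (Rabs_left t tl), <- Rabs_Ropp.
      replace (- (IZR k - (IZR z + 1/2) / - t * t)) with (IZR (- k) - (IZR z + 1/2))
        by (rewrite opp_IZR; field; auto).
      apply half_integer_distance.
    + rewrite (Rabs_right t tg).
      replace (IZR k - (IZR z + 1/2) / t * t) with (IZR k - (IZR z + 1/2)) by (field; auto).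
      apply half_integer_distance.
Qed.

Lemma eq_0_of_first_order_term (E : R -> R) v C :
  (forall eps, 0 < eps -> exists W, forall w, W <= w -> Rabs (E w) <= eps / w) ->
  (forall M, exists w, M < w /\ Rabs (E w - v / (2 * w)) <= C / w^2) ->
  v = 0.
Proof.
  intros Hlo Hexp. apply NNPP; intro vn.
  assert (vp : 0 < Rabs v) by (apply Rabs_pos_lt; auto).
  destruct (Hlo (Rabs v / 4)) as [W HW]; [lra|].
  destruct (Hexp (Rmax (Rmax W 0) (4 * C / Rabs v))) as (w & Mw & Hw).
  pose proof (Rmax_l (Rmax W 0) (4 * C / Rabs v)). pose proof (Rmax_r (Rmax W 0) (4 * C / Rabs v)).
  pose proof (Rmax_l W 0). pose proof (Rmax_r W 0).
  assert (wp : 0 < w) by lra.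
  specialize (HW w ltac:(lra)).
  assert (T : Rabs v / (2 * w) <= Rabs v / 4 / w + C / w^2).
  { replace (Rabs v / (2 * w)) with (Rabs (v / (2 * w)))
      by (rewrite Rabs_div, (Rabs_right (2 * w)) by lra; reflexivity).
    replace (v / (2 * w)) with (E w - (E w - v / (2 * w))) by ring.
    eapply Rle_trans; [apply Rabs_triang|]. rewrite Rabs_Ropp. lra. }
  assert (Cw : Rabs v * w <= 4 * C).
  { apply Rmult_le_compat_r with (r := 4 * w^2) in T; [|nra].
    replace (Rabs v / (2 * w) * (4 * w^2)) with (2 * (Rabs v * w)) in T by (field; lra).
    replace ((Rabs v / 4 / w + C / w^2) * (4 * w^2)) with (Rabs v * w + 4 * C) in T
      by (field; lra).
    lra. }
  assert (4 * C < Rabs v * w).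
  { replace (4 * C) with (Rabs v * (4 * C / Rabs v)) by (field; lra).
    apply Rmult_lt_compat_l; lra. }
  lra.
Qed.

Section Expansion.

Variables (chi f df ddf : R -> R) (B2 B : R).

Hypothesis f_deriv : forall x, 0 < x -> derivable_pt_lim f x (df x).
Hypothesis thetaf_deriv : forall x, 0 < x -> derivable_pt_lim (fun y => y * df y) x (ddf x).
Hypothesis theta2f_bound : forall x, 0 < x -> Rabs (x * ddf x) <= B2.
Hypothesis chi_partition : forall u, 0 < u -> zsum (fun k => chi (exp (- IZR k) * u)) 1.
Hypothesis chi_moment1 : forall u, 0 < u -> zsum (alg_moment_term chi 1 u) 0.
Hypothesis chi_moment2 :
  forall u, 0 < u -> exists s, zsum (abs_moment_term chi 2 u) s /\ s <= B.

Lemma I_op_expansion x w : 0 < x -> 0 < w ->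
  (forall k : Z, 1/2 <= Rabs (IZR k - w * ln x)) ->
  Rabs (I_op chi w f x - f x - x * df x / (2 * w)) <= 10 * B2 * B / w^2.
Proof.
  intros xp wp Hhalf.
  set (g := fun u => f (exp u)). set (g1 := fun u => exp u * df (exp u)).
  pose proof (derivable_pt_lim_comp_exp f df f_deriv) as D1.
  pose proof (derivable_pt_lim_comp_exp _ ddf thetaf_deriv) as D2.
  assert (Bd : forall u, Rabs (exp u * ddf (exp u)) <= B2) by (intro; apply theta2f_bound, exp_pos).
  assert (B2p : 0 <= B2) by (eapply Rle_trans; [apply Rabs_pos|apply (Bd 0)]).
  set (t := ln x). set (u := Rpower x w). set (v := x * df x).
  assert (Ev : v = g1 t) by (unfold v, g1, t; rewrite exp_ln; auto).
  assert (Ef : f x = g t) by (unfold g, t; rewrite exp_ln; auto).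
  assert (up : 0 < u) by apply exp_pos.
  assert (lu : ln u = w * t) by apply ln_exp.
  set (a := fun k : Z => chi (exp (- IZR k) * u)).
  set (rho := fun k : Z => w * Defs.RInt g (IZR k / w) ((IZR k + 1) / w) - g t
                             - v * (IZR k - w * t + 1/2) / w).
  assert (Hrho : forall k, Rabs (a k * rho k) <= 10 * B2 / w^2 * abs_moment_term chi 2 u k).
  { intro k. unfold abs_moment_term. fold (a k). rewrite lu.
    apply remainder_moment_bound; [exact wp|exact B2p|fold t; apply Hhalf|].
    pose proof (cell_average_expansion g g1 _ B2 t w (IZR k) D1 D2 Bd wp) as Hc.
    rewrite <- Ev in Hc. exact Hc. }
  destruct (chi_moment2 u up) as (s & Hs & sB).
  destruct (zsum_dominated _ _ _ Hrho (zsum_scal _ _ _ Hs)) as (S & HS & BS).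
  assert (Hsum : zsum (fun k => chi (exp (- IZR k) * Rpower x w) *
                    (w * Defs.RInt (fun u => f (exp u)) (IZR k / w) ((IZR k + 1) / w)))
                      (g t * 1 + v / w * 0 + v / (2 * w) * 1 + S)).
  { apply (zsum_ext (fun k => g t * a k + v / w * alg_moment_term chi 1 u k
                               + v / (2 * w) * a k + a k * rho k)).
    - intro k. unfold alg_moment_term. fold (a k). rewrite lu.
      unfold rho, a, u. fold g. field. lra.
    - apply zsum_plus; [|exact HS].
      apply zsum_plus; [apply zsum_plus|]; apply zsum_scal;
        first [apply chi_partition | apply chi_moment1]; exact up. }
  unfold I_op. rewrite (zseries_eq _ _ Hsum), Ef.
  replace (g t * 1 + v / w * 0 + v / (2 * w) * 1 + S - g t - v / (2 * w)) with S by ring.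
  replace (10 * B2 * B / w^2) with (10 * B2 / w^2 * B) by (field; lra).
  apply Rle_trans with (10 * B2 / w^2 * s); [exact BS|].
  apply Rmult_le_compat_l; [|exact sB].
  apply Rmult_le_pos; [lra|left; apply Rinv_0_lt_compat, pow_lt; exact wp].
Qed.

Lemma theta_eq_0_of_little_o x : 0 < x -> x <> 1 ->
  (forall eps, 0 < eps -> exists W, forall w, W <= w -> Rabs (I_op chi w f x - f x) <= eps / w) ->
  x * df x = 0.
Proof.
  intros xp x1 Hlo.
  apply (eq_0_of_first_order_term (fun w => I_op chi w f x - f x) _ (10 * B2 * B) Hlo).
  intro M.
  assert (tn : ln x <> 0) by (intro E; apply x1; rewrite <- (exp_ln x xp), E; apply exp_0).
  destruct (exists_half_integer_scale (ln x) (Rmax M 0) tn) as (w & Mw & Hhalf).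
  pose proof (Rmax_l M 0). pose proof (Rmax_r M 0).
  exists w. split; [lra|]. apply I_op_expansion; auto; lra.
Qed.

End Expansion.

Lemma constant_of_derivative_zero_off (f df : R -> R) p : 0 < p ->
  (forall x, 0 < x -> derivable_pt_lim f x (df x)) ->
  (forall x, 0 < x -> x <> p -> df x = 0) ->
  forall x, 0 < x -> f x = f p.
Proof.
  intros pp D Z x xp.
  destruct (Rtotal_order x p) as [H|[->|H]].
  - destruct (MVT_cor2 f df x p H (fun c Hc => D c ltac:(lra))) as (c & Ec & Hc).
    rewrite (Z c) in Ec by lra. lra.
  - reflexivity.
  - destruct (MVT_cor2 f df p x H (fun c Hc => D c ltac:(lra))) as (c & Ec & Hc).
    rewrite (Z c) in Ec by lra. lra.
Qed.

Theorem theorem5 (chi f : R -> R) :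
  kernel chi ->
  (forall u, 0 < u -> zsum (alg_moment_term chi 1 u) 0) ->
  C2_mellin f ->
  (forall eps, 0 < eps -> exists W, 0 < W /\ forall w, W <= w ->
     forall x, 0 < x -> Rabs (I_op chi w f x - f x) <= eps / w) ->
  exists c, forall x, 0 < x -> f x = c.
Proof.
  intros (_ & chi_partition & (B & chi_moment2) & _) chi_moment1
    (df & ddf & f_deriv & thetaf_deriv & _ & _ & _ & B2 & theta2f_bound) Hlo.
  exists (f 1). apply (constant_of_derivative_zero_off f df 1 Rlt_0_1 f_deriv).
  intros x xp x1.
  assert (Htheta : x * df x = 0).
  { apply (theta_eq_0_of_little_o chi f df ddf B2 B); auto.
    intros eps epsp. destruct (Hlo eps epsp) as (W & _ & HW).
    exists W. intros w Hw. apply HW; assumption. }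
  destruct (Rmult_integral _ _ Htheta); [lra|assumption].
Qed.
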